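(* Let $\Lambda=K\mathcal{Q}/I$ be a finite-dimensional algebra over a field $K$ as in the context, let $A\geqslant1$, let $\tilde{\Lambda}=\tilde{\Lambda}_A$ be its stretched algebra, and let $\varepsilon=\sum_{v\in\mathcal{Q}_0}v\in\tilde{\Lambda}$. Then $\Lambda\cong\varepsilon\tilde{\Lambda}\varepsilon$ as $K$-algebras.
   Context: Conventions: $\mathcal{Q}$ is a finite quiver with vertex set $\mathcal{Q}_0$; $\mathfrak{o}(\alpha)$, $\mathfrak{t}(\alpha)$ denote start and end of an arrow; paths are written left to right. An element $x\in K\mathcal{Q}$ is uniform if $x=vx=xv'$ for vertices $v,v'$. $\Lambda=K\mathcal{Q}/I$ is finite-dimensional with $I$ an admissible ideal generated by a minimal set $\{g^2_1,\dots,g^2_m\}$ of uniform elements. Stretched algebra: for $A\geqslant1$, the quiver $\tilde{\mathcal{Q}}_A$ has all vertices of $\mathcal{Q}$ plus, for each arrow $\alpha$ of $\mathcal{Q}$, new vertices $w_1,\dots,w_{A-1}$; each arrow $\alpha$ is replaced by arrows $\alpha_1,\dots,\alpha_A$ with $\mathfrak{o}(\alpha_1)=\mathfrak{o}(\alpha)$, $\mathfrak{t}(\alpha_j)=\mathfrak{o}(\alpha_{j+1})=w_j$ ($1\le j\le A-1$), $\mathfrak{t}(\alpha_A)=\mathfrak{t}(\alpha)$, and the only arrows incident with $w_j$ are $\alpha_j,\alpha_{j+1}$. $\theta^*:K\mathcal{Q}\to K\tilde{\mathcal{Q}}_A$ is the algebra homomorphism fixing vertices and sending $\alpha\mapsto\alpha_1\cdots\alpha_A$;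 $\tilde{I}_A$ is the ideal generated by $\theta^*(g^2_1),\dots,\theta^*(g^2_m)$; $\tilde{\Lambda}_A=K\tilde{\mathcal{Q}}_A/\tilde{I}_A$. *)

(* Path algebras K Q of finite quivers, represented by
   finite formal K-linear combinations of paths (elements equal iff all
   path coefficients agree), ideals generated by finite sets of elements,
   quotient algebras handled on representatives, stretched quivers. *)
From mathcomp Require Import all_boot all_algebra.
Set Implicit Arguments. Unset Strict Implicit. Unset Printing Implicit Defensive.
Import GRing.Theory.
Local Open Scope ring_scope.

Section PathAlgebra.
Variables (K : fieldType) (V Ar : finType) (src tgt : Ar -> V).

(* a path: start vertex and sequence of arrows, written left to right;
   (v, [::]) is the trivial path (vertex idempotent) at v *)
Definition qpath := (V * seq Ar)%type.
Definition pend (p : qpath) : V := last p.1 (map tgt p.2).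
Fixpoint chain_from (v : V) (s : seq Ar) : bool :=
  if s is a :: s' then (src a == v) && chain_from (tgt a) s' else true.
Definition valid_path (p : qpath) : bool := chain_from p.1 p.2.
Definition plen (p : qpath) : nat := size p.2.

Definition kq := seq (K * qpath).
Definition coef (x : kq) (p : qpath) : K :=
  if valid_path p then \sum_(e <- x | e.2 == p) e.1 else 0.
Definition kq_eq (x y : kq) : Prop := forall p, coef x p = coef y p.

Definition kq0 : kq := [::].
Definition kq_add (x y : kq) : kq := x ++ y.
Definition kq_scale (a : K) (x : kq) : kq := [seq (a * e.1, e.2) | e <- x].
Definition kq_sub (x y : kq) : kq := kq_add x (kq_scale (-1) y).
Definition kq_mul (x y : kq) : kq :=
  flatten [seq [seq (e.1 * f.1, (e.2.1, e.2.2 ++ f.2.2)) | f <- y &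
                 [&& valid_path e.2, valid_path f.2 & pend e.2 == f.2.1]]
          | e <- x].
Definition kq_path (p : qpath) : kq := [:: (1, p)].
Definition kq_vtx (v : V) : kq := kq_path (v, [::]).
Definition kq1 : kq := [seq (1, (v, [::])) | v <- enum V].

(* two-sided ideal generated by G : elements sum_j a_j u_j g_(i_j) w_j *)
Definition ideal_term (G : seq kq) (t : K * qpath * nat * qpath) : kq :=
  kq_scale t.1.1.1 (kq_mul (kq_mul (kq_path t.1.1.2) (nth kq0 G t.1.2))
                           (kq_path t.2)).
Definition in_ideal (G : seq kq) (x : kq) : Prop :=
  exists ts : seq (K * qpath * nat * qpath),
    kq_eq x (flatten (map (ideal_term G) ts)).
Definition kq_cong (G : seq kq) (x y : kq) : Prop := in_ideal G (kq_sub x y).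

Definition uniform (x : kq) : Prop :=
  exists v v' : V, kq_eq x (kq_mul (kq_vtx v) x) /\ kq_eq x (kq_mul x (kq_vtx v')).

(* x lies in R^n, R the arrow ideal: x is a combination of paths of length >= n *)
Definition in_arrow_pow (n : nat) (x : kq) : Prop :=
  forall p, (plen p < n)%N -> coef x p = 0.

Definition admissible (G : seq kq) : Prop :=
  (forall x, in_ideal G x -> in_arrow_pow 2 x) /\
  exists m : nat, (2 <= m)%N /\ (forall x, in_arrow_pow m x -> in_ideal G x).

Definition minimal_gens (G : seq kq) : Prop :=
  forall i, (i < size G)%N -> ~ in_ideal (take i G ++ drop i.+1 G) (nth kq0 G i).

Definition fin_dim_quot (G : seq kq) : Prop :=
  exists B : seq qpath, forall x, exists c : qpath -> K,
    kq_cong G x [seq (c p, p) | p <- B].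

End PathAlgebra.

(* Vertices: old vertices (inl v) and, for each
   arrow alpha, new vertices w_1..w_(A-1), w_(k+1) encoded as inr (alpha, k),
   k : 'I_(A-1).  Arrows: alpha_(i+1) encoded as (alpha, i), i : 'I_A. *)
Section Stretch.
Variables (V Ar : finType) (src tgt : Ar -> V) (A : nat).

Definition sV : finType := (V + (Ar * 'I_A.-1))%type.
Definition sAr : finType := (Ar * 'I_A)%type.

Definition s_src (b : sAr) : sV :=
  if val b.2 == 0%N then inl (src b.1)
  else match (insub (val b.2).-1 : option 'I_A.-1) with
       | Some k => inr (b.1, k)
       | None => inl (src b.1)   (* unreachable *)
       end.
Definition s_tgt (b : sAr) : sV :=
  match (insub (val b.2) : option 'I_A.-1) with
  | Some k => inr (b.1, k)
  | None => inl (tgt b.1)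
  end.

Definition theta_path (p : qpath V Ar) : qpath sV sAr :=
  (inl p.1, flatten [seq [seq (a, j) | j <- enum 'I_A] | a <- p.2]).
End Stretch.

Definition theta (K : fieldType) (V Ar : finType) (A : nat) (x : kq K V Ar)
  : kq K (sV V Ar A) (sAr Ar A) :=
  [seq (e.1, theta_path A e.2) | e <- x].

Definition epsilon (K : fieldType) (V Ar : finType) (A : nat)
  : kq K (sV V Ar A) (sAr Ar A) :=
  [seq (1, (inl v, [::])) | v <- enum V].

(* K-algebra isomorphism  K Q / <G>  ~=  e (K Q' / <G'>) e , expressed on
   representatives: f is well defined modulo the ideals, K-linear,
   multiplicative, sends 1 to the unit e of the corner algebra, takes values
   in the corner, and is bijective onto the corner. *)
Definition corner_iso (K : fieldType)
  (V Ar : finType) (src tgt : Ar -> V) (G : seq (kq K V Ar))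
  (V' Ar' : finType) (src' tgt' : Ar' -> V') (G' : seq (kq K V' Ar'))
  (e : kq K V' Ar') : Prop :=
  let cong := kq_cong src tgt G in
  let cong' := kq_cong src' tgt' G' in
  exists f : kq K V Ar -> kq K V' Ar',
    (forall x y, cong x y -> cong' (f x) (f y)) /\
        (forall x y, cong' (f (kq_add x y)) (kq_add (f x) (f y))) /\
        (forall (a : K) x, cong' (f (kq_scale a x)) (kq_scale a (f x))) /\
        (forall x y, cong' (f (kq_mul src tgt x y)) (kq_mul src' tgt' (f x) (f y))) /\
        cong' (f (kq1 K V Ar)) e /\
        (forall x, cong' (f x) (kq_mul src' tgt' (kq_mul src' tgt' e (f x)) e)) /\
        (forall x, cong' (f x) (kq0 K V' Ar') -> cong x (kq0 K V Ar)) /\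
        (forall y, exists x, cong' (f x) (kq_mul src' tgt' (kq_mul src' tgt' e y) e)).

(* theta^* replaces every arrow alpha by the chain alpha_1 ... alpha_A.
   Since a new vertex w_j has a single incoming and a single outgoing arrow, a
   path of the stretched quiver that starts and ends at old vertices consists
   of complete chains, so theta^* is a bijection from the paths of Q onto
   those paths, i.e. onto a basis of eps (K Q~) eps; being multiplicative,
   it is an algebra isomorphism K Q ~= eps (K Q~) eps.  It carries the ideal
   I onto eps I~ eps: if a term u theta^*(g) w of I~ contributes to a path
   between old vertices, then u and w also start and end at old vertices
   (theta^*(g) does), hence lie in the image of theta^*. *)

From mathcomp Require Import all_boot all_algebra.
Set Implicit Arguments. Unset Strict Implicit. Unset Printing Implicit Defensive.
Import GRing.Theory.
Local Open Scope ring_scope.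

Section PathAlgebra.
Variables (K : fieldType) (V Ar : finType) (src tgt : Ar -> V).
Implicit Types (x y : kq K V Ar) (p q u w : qpath V Ar) (S : seq V).

Lemma coef_kq0 p : coef src tgt (kq0 K V Ar) p = 0.
Proof. by rewrite /coef big_nil; case: ifP. Qed.

Lemma coef_invalid x p : ~~ valid_path src tgt p -> coef src tgt x p = 0.
Proof. by rewrite /coef => /negbTE ->. Qed.

Lemma coef_cat x y p :
  coef src tgt (x ++ y) p = coef src tgt x p + coef src tgt y p.
Proof. by rewrite /coef; case: ifP => _; rewrite ?big_cat ?addr0. Qed.

Lemma coef_scale a x p : coef src tgt (kq_scale a x) p = a * coef src tgt x p.
Proof.
by rewrite /coef /kq_scale; case: ifP => _; rewrite ?mulr0 // big_map mulr_sumr.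
Qed.

Lemma coef_sub x y p :
  coef src tgt (kq_sub x y) p = coef src tgt x p - coef src tgt y p.
Proof. by rewrite /kq_sub /kq_add coef_cat coef_scale mulN1r. Qed.

Lemma coef_flatten (L : seq (kq K V Ar)) p :
  coef src tgt (flatten L) p = \sum_(l <- L) coef src tgt l p.
Proof.
elim: L => [|l L IH]; first by rewrite big_nil coef_kq0.
by rewrite /= coef_cat IH big_cons.
Qed.

Lemma coef_mul x y q : coef src tgt (kq_mul src tgt x y) q =
  if valid_path src tgt q then
    \sum_(e <- x) \sum_(f <- y | [&& valid_path src tgt e.2, valid_path src tgt f.2,
         pend tgt e.2 == f.2.1 & (e.2.1, e.2.2 ++ f.2.2) == q]) e.1 * f.1
  else 0.
Proof.
rewrite /coef /kq_mul; case: ifP => // _.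
rewrite big_flatten /= big_map; apply: eq_bigr => e _.
by rewrite big_map big_filter_cond; apply: eq_bigl => f /=; rewrite -!andbA.
Qed.

Lemma kq_eq_cong G x y : kq_eq src tgt x y -> kq_cong src tgt G x y.
Proof. by move=> Exy; exists [::] => p; rewrite coef_sub Exy subrr coef_kq0. Qed.

Lemma pend_cat v s t : pend tgt (v, s ++ t) = pend tgt (pend tgt (v, s), t).
Proof. by rewrite /pend /= map_cat last_cat. Qed.

Lemma mem_kq_mul e x y : e \in kq_mul src tgt x y -> exists e1 f,
  [/\ e1 \in x, f \in y, valid_path src tgt e1.2, valid_path src tgt f.2 &
      pend tgt e1.2 = f.2.1 /\ e.2 = (e1.2.1, e1.2.2 ++ f.2.2)].
Proof.
rewrite /kq_mul => /flattenP [l /mapP [e1 He1 ->]] /mapP [f].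
by rewrite mem_filter => /andP [/and3P [Ve1 Vf /eqP Pe1] Hf] ->; exists e1, f.
Qed.

Definition kq_idem S : kq K V Ar := [seq (1, (v, [::])) | v <- S].

Definition corner_path S p :=
  [&& valid_path src tgt p, p.1 \in S & pend tgt p \in S].

Lemma sum_eq_uniq S z (c : K) :
  uniq S -> \sum_(v <- S | v == z) c = if z \in S then c else 0.
Proof.
move=> uS; rewrite big_const_seq.
have -> : count (fun v => v == z) S = (z \in S) := count_uniq_mem z uS.
by case: (z \in S); rewrite /= ?addr0.
Qed.

Lemma coef_idem_mul S y q : uniq S ->
  coef src tgt (kq_mul src tgt (kq_idem S) y) q =
  if q.1 \in S then coef src tgt y q else 0.
Proof.
move=> uS; rewrite coef_mul /coef; case: ifP => Vq; last by case: ifP.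
rewrite big_map /=.
rewrite (eq_bigr (fun v => if v == q.1 then \sum_(f <- y | f.2 == q) f.1 else 0)).
  by rewrite -big_mkcond sum_eq_uniq.
move=> v _; case: (eqVneq v q.1) => [->|Hv].
  apply: eq_big => [[c [w s]]|f _] /=; last by rewrite mul1r.
  case: q Vq => q1 qs Vq /=.
  by apply/and3P/eqP => [[_ /eqP <- /eqP ->] //|[-> ->]]; split; rewrite ?eqxx.
by apply: big1 => f /and3P [_ _ /eqP Eq]; rewrite -Eq eqxx in Hv.
Qed.

Lemma coef_mul_idem S y q : uniq S ->
  coef src tgt (kq_mul src tgt y (kq_idem S)) q =
  if pend tgt q \in S then coef src tgt y q else 0.
Proof.
move=> uS; rewrite coef_mul /coef; case: ifP => Vq; last by case: ifP.
rewrite (eq_bigr (fun e =>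
  if e.2 == q then (if pend tgt q \in S then e.1 else 0) else 0)).
  by case: ifP => _; [rewrite [RHS]big_mkcond | apply: big1 => e _; case: ifP].
move=> e _; rewrite big_map /=; case: (eqVneq e.2 q) => [Eq|Nq].
  rewrite (eq_bigl (fun v => v == pend tgt q)) ?sum_eq_uniq //; last first.
    by move=> v; rewrite cats0 -surjective_pairing Eq Vq eqxx andbT eq_sym.
  by case: ifP; rewrite ?mulr1.
apply: big1 => v /and3P [_ _ /eqP E].
by rewrite -E cats0 -surjective_pairing eqxx in Nq.
Qed.

Lemma coef_corner S y q : uniq S ->
  coef src tgt (kq_mul src tgt (kq_mul src tgt (kq_idem S) y) (kq_idem S)) q =
  if corner_path S q then coef src tgt y q else 0.
Proof.
move=> uS; rewrite coef_mul_idem // coef_idem_mul // /corner_path.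
case: (pend tgt q \in S); case: (q.1 \in S); rewrite ?andbF ?andbT //=.
by case: ifP => // /negbT /coef_invalid ->.
Qed.

Lemma corner_sandwich S u (h : kq K V Ar) w e :
  {in h, forall f, (f.2.1 \in S) && (pend tgt f.2 \in S)} ->
  e \in kq_mul src tgt (kq_mul src tgt (kq_path K u) h) (kq_path K w) ->
  corner_path S e.2 -> corner_path S u && corner_path S w.
Proof.
case: u w => [u1 us] [w1 ws] hS.
case/mem_kq_mul => e1 [_ [He1 /[1!inE] /eqP -> _ Vw [/= Pw ->]]].
case/mem_kq_mul: He1 => _ [f [/[1!inE] /eqP -> Hf /= Vu _ [/= Pu E1]]].
rewrite E1 /= in Pw * => {E1}; rewrite /= in Vw.
case/andP: (hS f Hf) => Sf1 Sf2.
have Pf : pend tgt (u1, us ++ f.2.2) = pend tgt f.2.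
  by rewrite pend_cat Pu -surjective_pairing.
rewrite /corner_path /= Vu Vw Pu Sf1 -Pw -pend_cat Pf Sf2.
by case/and3P => _ ->.
Qed.

End PathAlgebra.

Section StretchedPaths.
Variables (V Ar : finType) (src tgt : Ar -> V) (n : nat).
Local Notation SV := (sV V Ar n.+1).
Local Notation SAr := (sAr Ar n.+1).
Local Notation ss := (@s_src V Ar src n.+1).
Local Notation st := (@s_tgt V Ar tgt n.+1).
Local Notation thp := (theta_path n.+1).
Implicit Types (a : Ar) (p : qpath V Ar) (q : qpath SV SAr).

(* [chain_vtx a j] is the source of [a_(j+1)]: [src a] for [j = 0], then
   [w_1], ..., [w_(A-1)], and [tgt a] for [j = A]. *)
Definition chain_vtx a (j : nat) : SV :=
  if j == 0%N then inl (src a)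
  else if insub j.-1 is Some k then inr (a, k) else inl (tgt a).

Lemma inl_eqE (v w : V) : (inl v == inl w :> SV) = (v == w).
Proof. by apply/eqP/eqP => [[]|->]. Qed.

Lemma s_src_chain (b : SAr) : ss b = chain_vtx b.1 b.2.
Proof.
rewrite /s_src /chain_vtx; case: eqP => // b2; case: insubP => // /negP [].
by move: b2; case: b => a [[|m] Hm].
Qed.

Lemma s_tgt_chain (b : SAr) : st b = chain_vtx b.1 b.2.+1.
Proof. by []. Qed.

Lemma chain_vtx_last a : chain_vtx a n.+1 = inl (tgt a).
Proof. by rewrite /chain_vtx /= insubF // ltnn. Qed.

Definition chain_arrows a (j m : nat) : seq SAr := [seq (a, inord i) | i <- iota j m].

Lemma chain_arrowsS a j m :
  chain_arrows a j m.+1 = (a, inord j) :: chain_arrows a j.+1 m.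
Proof. by []. Qed.
Arguments chain_arrows : simpl never.

Definition stretch_arrows (s : seq Ar) : seq SAr :=
  flatten [seq chain_arrows a 0 n.+1 | a <- s].

Lemma stretch_arrows_cons a s :
  stretch_arrows (a :: s) = chain_arrows a 0 n.+1 ++ stretch_arrows s.
Proof. by []. Qed.
Arguments stretch_arrows : simpl never.

Lemma theta_pathE p : thp p = (inl p.1, stretch_arrows p.2).
Proof.
have enumE : enum 'I_n.+1 = [seq inord i | i <- iota 0 n.+1].
  apply: (inj_map val_inj); rewrite val_enum_ord -map_comp -[LHS]map_id.
  by apply/eq_in_map => i; rewrite mem_iota => /andP [_ Hi] /=; rewrite inordK.
rewrite /theta_path /stretch_arrows; congr (_, flatten _); apply: eq_map => a.
by rewrite enumE -map_comp.
Qed.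

Lemma chain_from_arrows a j m t : (j + m <= n.+1)%N ->
  chain_from ss st (chain_vtx a j) (chain_arrows a j m ++ t) =
  chain_from ss st (chain_vtx a (j + m)) t.
Proof.
elim: m j => [|m IH] j jm; first by rewrite addn0.
have jn : (j < n.+1)%N by rewrite -addSnnS in jm; exact: leq_trans (leq_addr _ _) jm.
by rewrite chain_arrowsS /= s_src_chain s_tgt_chain /= inordK // eqxx IH addSnnS.
Qed.

Lemma last_chain_arrows a j m z : (0 < m)%N -> (j + m = n.+1)%N ->
  last z (map st (chain_arrows a j m)) = inl (tgt a).
Proof.
elim: m j z => [|[|m] IH] j z // _ jm.
  by move: jm; rewrite addn1 => -[->] /=; rewrite /s_tgt /= inordK // insubF // ltnn.
by rewrite chain_arrowsS; apply: IH; rewrite ?addSnnS.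
Qed.

Lemma valid_theta_path p : valid_path ss st (thp p) = valid_path src tgt p.
Proof.
rewrite theta_pathE /valid_path; case: p => v s /=.
elim: s v => [|a s IH] v //.
rewrite stretch_arrows_cons chain_arrowsS /= s_src_chain s_tgt_chain /= inordK //.
by rewrite inl_eqE chain_from_arrows // add1n chain_vtx_last IH.
Qed.

Lemma pend_theta_path p : pend st (thp p) = inl (pend tgt p).
Proof.
rewrite theta_pathE /pend; case: p => v s /=.
elim: s v => [|a s IH] v //.
by rewrite stretch_arrows_cons map_cat last_cat last_chain_arrows // IH.
Qed.

Definition old_vertices : seq SV := [seq inl v | v <- enum V].

Lemma uniq_old_vertices : uniq old_vertices.
Proof. by rewrite map_inj_uniq ?enum_uniq // => v w []. Qed.

Lemma inl_old_vertex v : inl v \in old_vertices.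
Proof. by rewrite map_f ?mem_enum. Qed.

Local Notation corner := (corner_path ss st old_vertices).

Lemma corner_theta_path p : corner (thp p) = valid_path src tgt p.
Proof.
rewrite /corner_path valid_theta_path pend_theta_path theta_pathE.
by rewrite !inl_old_vertex /= andbT.
Qed.

Definition first_arrows (s : seq SAr) : seq Ar := [seq b.1 | b <- s & val b.2 == 0%N].

Lemma first_arrows_cons (b : SAr) s : first_arrows (b :: s) =
  if val b.2 == 0%N then b.1 :: first_arrows s else first_arrows s.
Proof. by rewrite /first_arrows /=; case: ifP. Qed.

Lemma first_arrows_cat s t : first_arrows (s ++ t) = first_arrows s ++ first_arrows t.
Proof. by rewrite /first_arrows filter_cat map_cat. Qed.

Lemma first_arrows_chain a : first_arrows (chain_arrows a 0 n.+1) = [:: a].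
Proof.
rewrite chain_arrowsS first_arrows_cons /= inordK // eqxx /first_arrows /chain_arrows.
rewrite filter_map (eq_in_filter (a2 := pred0)) ?filter_pred0 // => i.
by rewrite mem_iota => /andP [i1 i2] /=; rewrite inordK // eqn0Ngt i1.
Qed.

(* Only paths between old vertices are ever unstretched; the start [src a]
   chosen for paths beginning at a new vertex is junk. *)
Definition unstretch_path q : qpath V Ar :=
  (match q.1 with inl v => v | inr (a, _) => src a end, first_arrows q.2).

Lemma theta_pathK : cancel thp unstretch_path.
Proof.
move=> [v s]; rewrite theta_pathE /unstretch_path /=; congr pair.
elim: s => [|a s IH] //.
by rewrite stretch_arrows_cons first_arrows_cat IH first_arrows_chain.
Qed.

Definition chain_rest (z : SV) : seq SAr :=
  if z is inr (a, k) then chain_arrows a k.+1 (n - k) else [::].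

Lemma chain_rest_vtx a j : (0 < j <= n.+1)%N ->
  chain_rest (chain_vtx a j) = chain_arrows a j (n.+1 - j).
Proof.
case: j => [//|j] /= jn; rewrite /chain_vtx /=.
case: insubP => [k _ <- | ]; first by rewrite subSS.
rewrite -leqNgt => nj.
have -> : j = n by apply/eqP; rewrite eqn_leq -ltnS jn.
by rewrite subnn.
Qed.

Lemma chain_arrows_rest a (j : 'I_n.+1) :
  chain_arrows a j (n.+1 - j) = (a, j) :: chain_rest (chain_vtx a j.+1).
Proof.
rewrite chain_rest_vtx ?ltn_ord // -(subnSK (ltn_ord j)) chain_arrowsS.
by congr ((a, _) :: _); apply: val_inj; rewrite /= inordK.
Qed.

Lemma chain_decomp s z :
  chain_from ss st z s -> last z (map st s) \in old_vertices ->
  s = chain_rest z ++ stretch_arrows (first_arrows s).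
Proof.
elim: s z => [|b s IH] z /=; first by case: z => [//|[a k]] _ /mapP [].
case/andP => /eqP <- {z} /IH /[apply] Es; rewrite {1}Es {Es}.
case: b => a j; rewrite s_src_chain s_tgt_chain first_arrows_cons /= -cat_cons.
rewrite -chain_arrows_rest; case: eqP => [j0 | /eqP jn0].
  by rewrite stretch_arrows_cons catA j0 subn0.
by rewrite chain_rest_vtx // lt0n jn0 ltnW.
Qed.

Lemma unstretch_pathK q : corner q -> thp (unstretch_path q) = q.
Proof.
case: q => [[v|[a k]] s] /and3P [Vq Sq Pq]; last by case/mapP: Sq.
by rewrite theta_pathE /=; congr pair; apply/esym/(chain_decomp Vq Pq).
Qed.
End StretchedPaths.

Section StretchedAlgebra.
Variables (K : fieldType) (V Ar : finType) (src tgt : Ar -> V) (n : nat).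
Local Notation SV := (sV V Ar n.+1).
Local Notation SAr := (sAr Ar n.+1).
Local Notation ss := (@s_src V Ar src n.+1).
Local Notation st := (@s_tgt V Ar tgt n.+1).
Local Notation thp := (theta_path n.+1).
Local Notation th := (@theta K V Ar n.+1).
Local Notation old := (old_vertices V Ar n).
Local Notation corner := (corner_path ss st old).
Local Notation ust := (unstretch_path src).
Local Notation eps := (epsilon K V Ar n.+1).
Implicit Types (x y : kq K V Ar) (z : kq K SV SAr) (p u w : qpath V Ar)
  (q : qpath SV SAr) (G : seq (kq K V Ar)).

Lemma theta_cat x y : th (x ++ y) = th x ++ th y.
Proof. exact: map_cat. Qed.

Lemma theta_scale a x : th (kq_scale a x) = kq_scale a (th x).
Proof. by rewrite /theta /kq_scale -!map_comp. Qed.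

Lemma theta_sub x y : th (kq_sub x y) = kq_sub (th x) (th y).
Proof. by rewrite /kq_sub /kq_add theta_cat theta_scale. Qed.

Lemma theta_flatten (L : seq (kq K V Ar)) : th (flatten L) = flatten (map th L).
Proof. exact: map_flatten. Qed.

Lemma theta_nth G i :
  th (nth (kq0 K V Ar) G i) = nth (kq0 K SV SAr) (map th G) i.
Proof.
case: (ltnP i (size G)) => iG; first by rewrite (nth_map (kq0 K V Ar)).
by rewrite !nth_default ?size_map.
Qed.

Lemma theta_path_cat u w :
  thp (u.1, u.2 ++ w.2) = ((thp u).1, (thp u).2 ++ (thp w).2).
Proof. by rewrite /theta_path /= map_cat flatten_cat. Qed.

Lemma theta_mul x y : th (kq_mul src tgt x y) = kq_mul ss st (th x) (th y).
Proof.
rewrite /theta /kq_mul map_flatten -!map_comp; congr flatten.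
apply: eq_map => e /=.
rewrite filter_map -!map_comp (eq_filter (a1 := preim _ _) (a2 := fun f =>
  [&& valid_path src tgt e.2, valid_path src tgt f.2 & pend tgt e.2 == f.2.1])).
  by apply: eq_map => f /=; rewrite theta_path_cat.
by move=> f /=; rewrite !valid_theta_path pend_theta_path (inl_eqE Ar n).
Qed.

Lemma theta_kq1 : th (kq1 K V Ar) = eps.
Proof. by rewrite /theta /kq1 /epsilon -map_comp. Qed.

Lemma theta_ideal_term G a u i w :
  th (ideal_term src tgt G (a, u, i, w)) =
  ideal_term ss st (map th G) (a, thp u, i, thp w).
Proof. by rewrite /ideal_term /= theta_scale !theta_mul theta_nth. Qed.

Lemma coef_theta x q :
  coef ss st (th x) q = if corner q then coef src tgt x (ust q) else 0.
Proof.
rewrite /coef /theta big_map /=; case cq: (corner q).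
  rewrite -{1 2}(unstretch_pathK cq) valid_theta_path; case: ifP => // _.
  by apply: eq_bigl => e /=; rewrite (inj_eq (can_inj (theta_pathK src n))).
case: ifP => // Vq; apply: big1 => e /eqP Ee.
by move: cq; rewrite -Ee corner_theta_path -(valid_theta_path src tgt n) Ee Vq.
Qed.

Lemma coef_theta_path x p : coef ss st (th x) (thp p) = coef src tgt x p.
Proof.
rewrite coef_theta corner_theta_path theta_pathK.
by case: ifP => // /negbT /coef_invalid ->.
Qed.

Lemma theta_kq_eq x y : kq_eq src tgt x y -> kq_eq ss st (th x) (th y).
Proof. by move=> Exy q; rewrite !coef_theta Exy. Qed.

Lemma theta_cong G x y :
  kq_cong src tgt G x y -> kq_cong ss st (map th G) (th x) (th y).
Proof.
case=> ts /theta_kq_eq; rewrite /kq_cong theta_sub theta_flatten -map_comp => E.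
exists [seq (t.1.1.1, thp t.1.1.2, t.1.2, thp t.2) | t <- ts].
rewrite -map_comp; congr (kq_eq _ _ _ (flatten _)): E.
by apply: eq_map => -[[[a u] i] w]; rewrite /= theta_ideal_term.
Qed.

Lemma theta_old_ends x :
  {in th x, forall f, (f.2.1 \in old) && (pend st f.2 \in old)}.
Proof.
by move=> _ /mapP [e _ ->]; rewrite pend_theta_path theta_pathE !inl_old_vertex.
Qed.

Lemma coef_ideal_term_theta G a (u w : qpath SV SAr) i p :
  coef ss st (ideal_term ss st (map th G) (a, u, i, w)) (thp p) =
  if corner u && corner w
  then coef src tgt (ideal_term src tgt G (a, ust u, i, ust w)) p else 0.
Proof.
case: ifP => [/andP [cu cw] | ncorner].
  rewrite -{1}(unstretch_pathK cu) -{1}(unstretch_pathK cw).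
  by rewrite -theta_ideal_term coef_theta_path.
rewrite /coef; case: ifP => // Vp.
apply: big1_seq => e /andP [/eqP Ee /mapP [e0 /= He0 Ee0]].
have ends := theta_old_ends (x := nth (kq0 K V Ar) G i); rewrite theta_nth in ends.
suff : corner u && corner w by rewrite ncorner.
apply: (corner_sandwich ends He0).
have -> : e0.2 = e.2 by rewrite Ee0.
by rewrite Ee corner_theta_path -(valid_theta_path src tgt n).
Qed.

Lemma theta_cong_inv G x y :
  kq_cong ss st (map th G) (th x) (th y) -> kq_cong src tgt G x y.
Proof.
rewrite /kq_cong -theta_sub => -[ts E].
exists [seq (t.1.1.1, ust t.1.1.2, t.1.2, ust t.2)
         | t <- ts & corner t.1.1.2 && corner t.2].
move=> p; rewrite -coef_theta_path E !coef_flatten !big_map big_filter [RHS]big_mkcond.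
by apply: eq_bigr => -[[[a u] i] w] _; rewrite coef_ideal_term_theta.
Qed.

Definition unstretch z : kq K V Ar := [seq (e.1, ust e.2) | e <- z & corner e.2].

Lemma coef_unstretch z p : coef src tgt (unstretch z) p = coef ss st z (thp p).
Proof.
rewrite /coef /unstretch big_map big_filter_cond valid_theta_path; case: ifP => // Vp.
apply: eq_bigl => e /=; apply/andP/eqP => [[ce /eqP <-]|->].
  by rewrite (unstretch_pathK ce).
by rewrite corner_theta_path Vp theta_pathK.
Qed.

Lemma coef_epsilon z q :
  coef ss st (kq_mul ss st (kq_mul ss st eps z) eps) q =
  if corner q then coef ss st z q else 0.
Proof.
have -> : eps = kq_idem K SAr old.
  by rewrite /epsilon /kq_idem /old_vertices; elim: (enum V) => //= v s ->.
by rewrite coef_corner // uniq_old_vertices.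
Qed.

Lemma stretch_corner_iso G : corner_iso src tgt G ss st (map th G) eps.
Proof.
exists th; split; first exact: theta_cong.
split; first by move=> x y; apply: kq_eq_cong => q; rewrite theta_cat.
split; first by move=> a x; apply: kq_eq_cong => q; rewrite theta_scale.
split; first by move=> x y; apply: kq_eq_cong => q; rewrite theta_mul.
split; first by apply: kq_eq_cong => q; rewrite theta_kq1.
split; first by move=> x; apply: kq_eq_cong => q; rewrite coef_epsilon coef_theta; case: ifP.
split; first by move=> x; apply: (theta_cong_inv (y := kq0 K V Ar)).
move=> z; exists (unstretch z); apply: kq_eq_cong => q.
rewrite coef_epsilon coef_theta; case: ifP => // cq.
by rewrite coef_unstretch (unstretch_pathK cq).
Qed.

End StretchedAlgebra.

Theorem theorem1p9 (K : fieldType) (V Ar : finType) (src tgt : Ar -> V)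
  (G : seq (kq K V Ar)) (A : nat) :
  (forall g, g \in G -> uniform src tgt g) ->
  admissible src tgt G ->
  minimal_gens src tgt G ->
  fin_dim_quot src tgt G ->
  (1 <= A)%N ->
  corner_iso src tgt G
    (@s_src V Ar src A) (@s_tgt V Ar tgt A) [seq theta A g | g <- G]
    (epsilon K V Ar A).
Proof.
move=> _ _ _ _; case: A => [//|n] _.
exact: stretch_corner_iso.
Qed.
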